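(* Let $\varphi\colon G\to G$ be an endomorphism of an abelian group $G$, let $t(G)$ be the torsion subgroup of $G$, $\varphi|_{t(G)}\colon t(G)\to t(G)$ the restriction, and $S$ a finite subgroup of $G$. Then: (1) $S$ is a positive generator for $\varphi$ if and only if $\sum_{k\in\mathbb N}\varphi^kS=t(G)$; (2) $\varphi$ is positively $S$-expansive if and only if $\varphi|_{t(G)}$ is positively $S$-expansive. If moreover $\varphi$ is an automorphism, then: (3) $S$ is a generator for $\varphi$ if and only if $\sum_{k\in\mathbb Z}\varphi^kS=t(G)$; (4) $\varphi$ is $S$-expansive if and only if $\varphi|_{t(G)}$ is $S$-expansive.
   Context: $\mathbb N=\{0,1,2,\dots\}$. For an endomorphism $\varphi$ of an abelian group $G$, a finite subgroup $S\leq G$ is a positive generator (and $\varphi$ is called positively $S$-expansive) if for every finite subgroup $F\leq G$ there is $n\in\mathbb N$ with $F\subseteq\sum_{k=0}^n\varphi^kS$. For an automorphism $\varphi$, a finite subgroup $S$ is a generator (and $\varphi$ is $S$-expansive) if for every finite subgroup $F\leq G$ there is $n\in\mathbb N$ with $F\subseteq\sum_{|k|\leq n}\varphi^kS$; for negative $k$, $\varphi^k$ denotes the power of $\varphi^{-1}$. *)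

From HB Require Import structures.
From mathcomp Require Import all_boot all_order all_algebra.
From mathcomp Require Import boolp classical_sets cardinality.
Set Implicit Arguments. Unset Strict Implicit. Unset Printing Implicit Defensive.
Import GRing.Theory.
Local Open Scope ring_scope.
Local Open Scope classical_set_scope.

Section Defs.
Variable G : zmodType.

Definition is_subgroup (S : set G) : Prop :=
  S 0 /\ forall x y, S x -> S y -> S (x - y).
Definition finite_subgroup (S : set G) : Prop :=
  is_subgroup S /\ finite_set S.

Definition pos_partial_sum (phi : G -> G) (S : set G) (n : nat) : set G :=
  [set x | exists f : nat -> G, (forall k, (k <= n)%N -> S (f k)) /\
       x = \sum_(k < n.+1) iter k phi (f k)].

Definition pos_full_sum (phi : G -> G) (S : set G) : set G :=
  [set x | exists n, pos_partial_sum phi S n x].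

(** \sum_{|k| <= n} phi^k S, where phi^k for k < 0 is psi^(-k), psi = phi^-1 *)
Definition sym_partial_sum (phi psi : G -> G) (S : set G) (n : nat) : set G :=
  [set x | exists f g : nat -> G,
       (forall k, (k <= n)%N -> S (f k) /\ S (g k)) /\
       x = \sum_(k < n.+1) iter k phi (f k) + \sum_(k < n) iter k.+1 psi (g k)].

Definition sym_full_sum (phi psi : G -> G) (S : set G) : set G :=
  [set x | exists n, sym_partial_sum phi psi S n x].

Definition pos_generator (phi : G -> G) (S : set G) : Prop :=
  forall F : set G, finite_subgroup F ->
    exists n : nat, F `<=` pos_partial_sum phi S n.
Definition pos_expansive (phi : G -> G) (S : set G) : Prop :=
  pos_generator phi S.

Definition generator (phi psi : G -> G) (S : set G) : Prop :=
  forall F : set G, finite_subgroup F ->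
    exists n : nat, F `<=` sym_partial_sum phi psi S n.
Definition expansive (phi psi : G -> G) (S : set G) : Prop :=
  generator phi psi S.

Definition torsion : set G := [set x | exists n : nat, (0 < n)%N /\ x *+ n = 0].

End Defs.

Section TorsionType.
Variable G : zmodType.

Definition tors : Type := {x : G | torsion x}.
HB.instance Definition _ := gen_eqMixin tors.
HB.instance Definition _ := gen_choiceMixin tors.

Lemma torsion0 : torsion (0 : G).
Proof. by exists 1%N; rewrite mulr1n. Qed.

Lemma torsionN (x : G) : torsion x -> torsion (- x).
Proof. by move=> [n [n0 hx]]; exists n; split => //; rewrite mulNrn hx oppr0. Qed.

Lemma torsionD (x y : G) : torsion x -> torsion y -> torsion (x + y).
Proof.
move=> [n [n0 hx]] [m [m0 hy]]; exists (n * m)%N; split; first by rewrite muln_gt0 n0.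
by rewrite mulrnDl mulrnA hx mul0rn mulnC mulrnA hy mul0rn addr0.
Qed.

Definition tors_zero : tors := exist _ 0 torsion0.
Definition tors_opp (x : tors) : tors := exist _ (- proj1_sig x) (torsionN (proj2_sig x)).
Definition tors_add (x y : tors) : tors :=
  exist _ (proj1_sig x + proj1_sig y) (torsionD (proj2_sig x) (proj2_sig y)).

Lemma tors_eq (x y : tors) : proj1_sig x = proj1_sig y -> x = y.
Proof.
case: x => x hx; case: y => y hy /= e; subst y.
by rewrite (Prop_irrelevance hx hy).
Qed.

Lemma tors_addA : associative tors_add.
Proof. by move=> x y z; apply: tors_eq; rewrite /= addrA. Qed.
Lemma tors_addC : commutative tors_add.
Proof. by move=> x y; apply: tors_eq; rewrite /= addrC. Qed.
Lemma tors_add0 : left_id tors_zero tors_add.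
Proof. by move=> x; apply: tors_eq; rewrite /= add0r. Qed.
Lemma tors_addN : left_inverse tors_zero tors_opp tors_add.
Proof. by move=> x; apply: tors_eq; rewrite /= addNr. Qed.

HB.instance Definition _ := GRing.isZmodule.Build tors
  tors_addA tors_addC tors_add0 tors_addN.

Lemma additive_torsion (phi : {additive G -> G}) (x : G) :
  torsion x -> torsion (phi x).
Proof. by move=> [n [n0 hx]]; exists n; split => //; rewrite -raddfMn hx raddf0. Qed.

Definition tors_restr (phi : {additive G -> G}) (x : tors) : tors :=
  exist _ (phi (proj1_sig x)) (additive_torsion phi (proj2_sig x)).

Definition tors_set (S : set G) : set tors := [set x | S (proj1_sig x)].

Lemma inverse_torsion (phi : {additive G -> G}) (psi : G -> G)
  (h1 : cancel phi psi) (h2 : cancel psi phi) (x : G) :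
  torsion x -> torsion (psi x).
Proof.
move=> [n [n0 hx]]; exists n; split => //.
by apply: (can_inj h1); rewrite raddfMn h2 hx raddf0.
Qed.

Definition tors_restr_inv (phi : {additive G -> G}) (psi : G -> G)
  (h1 : cancel phi psi) (h2 : cancel psi phi) (x : tors) : tors :=
  exist _ (psi (proj1_sig x)) (inverse_torsion h1 h2 (proj2_sig x)).

End TorsionType.

From HB Require Import structures.
From mathcomp Require Import all_boot all_order all_algebra.
From mathcomp Require Import boolp classical_sets cardinality.

(* A finite subgroup consists of torsion elements, and every torsion element x
   lies in the finite subgroup of its multiples.  Hence a nondecreasing family
   A_0 ⊆ A_1 ⊆ ... eventually contains every finite subgroup iff its union
   contains t(G).  The partial sums of φ^k S are exactly the images of the
   partial sums of (φ|t(G))^k S computed inside t(G), since S ⊆ t(G); so their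
   union lies in t(G), which gives (1) and (3), and a family absorbs the finite
   subgroups of G iff its counterpart absorbs those of t(G), which gives (2)
   and (4). *)

Set Implicit Arguments. Unset Strict Implicit. Unset Printing Implicit Defensive.
Import GRing.Theory.
Local Open Scope ring_scope.
Local Open Scope classical_set_scope.

Lemma finite_subset_nondecreasing_bigcup (T : eqType) (A : nat -> set T)
    (F : set T) :
  (forall n, A n `<=` A n.+1) -> finite_set F -> F `<=` \bigcup_n A n ->
  exists n, F `<=` A n.
Proof.
move=> A_subS /finite_seqP[s ->] {F}.
have A_mono :=
  homo_leq (fun=> @subset_refl _ _) (fun _ _ _ => @subset_trans _ _ _ _) A_subS.
elim: s => [|x s IHs] s_sub; first by exists 0%N.
have [m _ Amx] := s_sub x (mem_head x s).
have [n s_An] : exists n, [set` s] `<=` A n.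
  by apply: IHs => y sy; apply: s_sub; rewrite /= in_cons sy orbT.
exists (maxn m n) => y /=; rewrite in_cons => /orP[/eqP-> | sy].
- exact: A_mono (leq_maxl m n) _ Amx.
- exact: A_mono (leq_maxr m n) _ (s_An _ sy).
Qed.

Section FiniteSubgroups.
Variable G : zmodType.

Lemma finite_subgroup_torsion (F : set G) :
  finite_subgroup F -> F `<=` @torsion G.
Proof.
move=> [[F0 FB] Ffin] x Fx; apply: contrapT => xNtors.
have F_mul k : F (x *+ k).
  elim: k => [|k IHk]; first by rewrite mulr0n.
  by have := FB _ _ Fx (FB _ _ F0 IHk); rewrite sub0r opprK mulrS.
have mul_inj : injective (fun k => x *+ k).
  move=> i j; wlog le_ij : i j / (i <= j)%N => [hw eq_ij|/= eq_ij].
    by case: (leqP i j) => [/hw -> | /ltnW /hw ->].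
  apply/eqP; rewrite eqn_leq le_ij -subn_eq0 /=.
  apply: contraT; rewrite -lt0n => ji_gt0.
  by case: xNtors; exists (j - i)%N; rewrite ji_gt0 mulrnBr // eq_ij subrr.
apply: infinite_nat; rewrite -(preimage_range (fun k => x *+ k)).
apply: finite_preimage; first by move=> i j _ _; apply: mul_inj.
by apply: sub_finite_set Ffin => _ [k _ <-].
Qed.

Lemma torsion_multiples_finite_subgroup (x : G) :
  torsion x -> finite_subgroup (range (fun k => x *+ k)).
Proof.
move=> [n [n_gt0 xn0]].
have xnk0 k : x *+ (n * k) = 0 by rewrite mulrnA xn0 mul0rn.
split; first split.
- by exists 0%N.
- move=> _ _ [i _ <-] [j _ <-]; exists (i + (n * j - j))%N => //.
  by rewrite mulrnDr mulrnBr ?leq_pmull // xnk0 sub0r.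
- apply: sub_finite_set (finite_image (fun k => x *+ k) (finite_II n)) => _ [k _ <-].
  exists (k %% n)%N; first by rewrite /= ltn_mod.
  by rewrite {2}(divn_eq k n) mulrnDr mulnC xnk0 add0r.
Qed.

Definition absorbs_finite_subgroups (A : nat -> set G) : Prop :=
  forall F, finite_subgroup F -> exists n, F `<=` A n.

Lemma absorbs_finite_subgroupsE (A : nat -> set G) :
  (forall n, A n `<=` A n.+1) ->
  absorbs_finite_subgroups A <-> @torsion G `<=` \bigcup_n A n.
Proof.
move=> A_subS; split=> [absorbs x tx | tors_sub F FF].
- have [n An] := absorbs _ (torsion_multiples_finite_subgroup tx).
  exists n => //; apply: An; exists 1%N => //; exact: mulr1n.
- apply: finite_subset_nondecreasing_bigcup A_subS FF.2 _.
  exact: subset_trans (finite_subgroup_torsion FF) tors_sub.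
Qed.

End FiniteSubgroups.

Section TorsionSubgroup.
Variable G : zmodType.

Definition tors_val (y : tors G) : G := proj1_sig y.

Lemma tors_val_is_zmod_morphism : zmod_morphism tors_val.
Proof. by []. Qed.

HB.instance Definition _ :=
  GRing.isZmodMorphism.Build (tors G) G tors_val tors_val_is_zmod_morphism.

Lemma tors_val_inj : injective tors_val.
Proof. exact: tors_eq. Qed.

Lemma torsion_tors (y : tors G) : torsion y.
Proof.
case: (y) => x [n [n_gt0 xn0]]; exists n; split=> //.
by apply: tors_val_inj; rewrite raddfMn.
Qed.

Lemma tors_val_iter (f : tors G -> tors G) (g : G -> G) :
  (forall y, tors_val (f y) = g (tors_val y)) ->
  forall k y, tors_val (iter k f y) = iter k g (tors_val y).
Proof. by move=> fg; elim=> [|k IHk] y //=; rewrite fg IHk. Qed.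

Definition tors_of (x : G) : tors G :=
  if pselect (torsion x) is left tx then exist _ x tx else 0.

Lemma tors_ofK (x : G) : torsion x -> tors_val (tors_of x) = x.
Proof. by rewrite /tors_of; case: pselect. Qed.

Lemma tors_set_tors_of (S : set G) (x : G) :
  S `<=` @torsion G -> S x -> tors_set S (tors_of x).
Proof.
move=> S_tors Sx; change (S (tors_val (tors_of x))).
by rewrite tors_ofK //; apply: S_tors.
Qed.

End TorsionSubgroup.

Section PartialSums.
Variables (G : zmodType) (S : set G) (phi psi : G -> G).

Lemma pos_full_sumE : pos_full_sum phi S = \bigcup_n pos_partial_sum phi S n.
Proof. by apply/seteqP; split=> x [n]; [exists n | move=> _; exists n]. Qed.

Lemma sym_full_sumE :
  sym_full_sum phi psi S = \bigcup_n sym_partial_sum phi psi S n.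
Proof. by apply/seteqP; split=> x [n]; [exists n | move=> _; exists n]. Qed.

Hypotheses (S0 : S 0) (phi0 : phi 0 = 0) (psi0 : psi 0 = 0).

Lemma pos_partial_sum_subS n :
  pos_partial_sum phi S n `<=` pos_partial_sum phi S n.+1.
Proof.
move=> _ [f [Sf ->]]; exists (fun k => if (k <= n)%N then f k else 0); split.
  by move=> k _; case: ifP => // /Sf.
rewrite [RHS]big_ord_recr /= ltnn iter_fix // phi0 addr0.
by apply: eq_bigr => k _ /=; rewrite leq_ord.
Qed.

Lemma sym_partial_sum_subS n :
  sym_partial_sum phi psi S n `<=` sym_partial_sum phi psi S n.+1.
Proof.
move=> _ [f [g [Sfg ->]]].
exists (fun k => if (k <= n)%N then f k else 0).
exists (fun k => if (k < n)%N then g k else 0); split.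
  move=> k _; split; case: ifP => // kn.
  - by case: (Sfg k kn).
  - by case: (Sfg k (ltnW kn)).
rewrite [in RHS]big_ord_recr [in X in _ = _ + X]big_ord_recr /=.
rewrite ltnn !iter_fix // phi0 psi0 !addr0.
by congr (_ + _); apply: eq_bigr => k _ /=; rewrite ?leq_ord ?ltn_ord.
Qed.

End PartialSums.

Section PartialSumsInTorsion.
Variables (G : zmodType) (S : set G) (phi psi : G -> G).
Variables (phiT psiT : tors G -> tors G).
Hypothesis S_tors : S `<=` @torsion G.
Hypothesis phiT_val : forall y, tors_val (phiT y) = phi (tors_val y).
Hypothesis psiT_val : forall y, tors_val (psiT y) = psi (tors_val y).

Lemma pos_partial_sum_tors n :
  pos_partial_sum phi S n = @tors_val G @` pos_partial_sum phiT (tors_set S) n.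
Proof.
have iterE := tors_val_iter phiT_val.
apply/seteqP; split=> [_ [f [Sf ->]] | _ [_ [f [Sf ->]] <-]].
- exists (\sum_(k < n.+1) iter k phiT (tors_of (f k))).
    exists (fun k => tors_of (f k)); split=> // k kn.
    exact/(tors_set_tors_of S_tors)/Sf.
  rewrite raddf_sum /=; apply: eq_bigr => k _.
  by rewrite iterE tors_ofK //; apply/S_tors/Sf/leq_ord.
- exists (fun k => tors_val (f k)); split=> //.
  by rewrite raddf_sum /=; apply: eq_bigr => k _; rewrite iterE.
Qed.

Lemma sym_partial_sum_tors n :
  sym_partial_sum phi psi S n =
  @tors_val G @` sym_partial_sum phiT psiT (tors_set S) n.
Proof.
have phi_iterE := tors_val_iter phiT_val.
have psi_iterE := tors_val_iter psiT_val.
apply/seteqP; split=> [_ [f [g [Sfg ->]]] | _ [_ [f [g [Sfg ->]]] <-]].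
- have Sf k : (k <= n)%N -> S (f k) by move=> /Sfg[].
  have Sg k : (k <= n)%N -> S (g k) by move=> /Sfg[].
  exists (\sum_(k < n.+1) iter k phiT (tors_of (f k)) +
          \sum_(k < n) iter k.+1 psiT (tors_of (g k))).
    exists (fun k => tors_of (f k)), (fun k => tors_of (g k)).
    by split=> // k kn; split; apply/(tors_set_tors_of S_tors); [apply: Sf | apply: Sg].
  rewrite raddfD !raddf_sum /=; congr (_ + _); apply: eq_bigr => k _.
  + by rewrite phi_iterE tors_ofK //; apply/S_tors/Sf/leq_ord.
  + by rewrite psiT_val psi_iterE tors_ofK //; apply/S_tors/Sg/ltnW/ltn_ord.
- exists (fun k => tors_val (f k)), (fun k => tors_val (g k)); split=> //.
  rewrite raddfD !raddf_sum /=; congr (_ + _); apply: eq_bigr => k _.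
  + by rewrite phi_iterE.
  + by rewrite psiT_val psi_iterE.
Qed.

End PartialSumsInTorsion.

Section TorsionImageFamilies.
Variables (G : zmodType) (A : nat -> set G) (B : nat -> set (tors G)).
Hypothesis A_subS : forall n, A n `<=` A n.+1.
Hypothesis A_image : forall n, A n = @tors_val G @` B n.

Lemma absorbs_iff_bigcup_eq_torsion :
  absorbs_finite_subgroups A <-> \bigcup_n A n = @torsion G.
Proof.
have bigcup_tors : \bigcup_n A n `<=` @torsion G.
  by move=> x [n _]; rewrite A_image => -[[y ty] _ <-].
rewrite absorbs_finite_subgroupsE // eqEsubset.
by split=> [|[]].
Qed.

Lemma absorbs_iff_tors_absorbs :
  absorbs_finite_subgroups A <-> absorbs_finite_subgroups B.
Proof.
have B_subS n : B n `<=` B n.+1.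
  move=> y Bny; have : A n.+1 (tors_val y) by apply: A_subS; rewrite A_image; exists y.
  by rewrite A_image => -[z Bz /tors_val_inj <-].
rewrite !absorbs_finite_subgroupsE //; split=> [tors_sub y _ | tors_sub x tx].
- have [n _] := tors_sub _ (proj2_sig y).
  by rewrite A_image => -[z Bz /tors_val_inj zy]; exists n; rewrite // -zy.
- have [n _ Bn] := tors_sub (exist _ x tx) (torsion_tors _).
  by exists n => //; rewrite A_image; exists (exist _ x tx).
Qed.

End TorsionImageFamilies.

Theorem proposition2p2 (G : zmodType) (phi : {additive G -> G}) (S : set G)
  (hS : finite_subgroup S) :
  (* (1) *)
  (pos_generator phi S <-> pos_full_sum phi S = @torsion G) /\
  (* (2) *)
  (pos_expansive phi S <-> pos_expansive (tors_restr phi) (tors_set S)) /\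
  (* (3), (4): when phi is an automorphism with inverse psi *)
  (forall (psi : G -> G) (h1 : cancel phi psi) (h2 : cancel psi phi),
     (generator phi psi S <-> sym_full_sum phi psi S = @torsion G) /\
     (expansive phi psi S <->
        expansive (tors_restr phi) (tors_restr_inv h1 h2) (tors_set S))).
Proof.
have S0 : S 0 by case: hS => -[].
have S_tors := finite_subgroup_torsion hS.
have phi0 : phi 0 = 0 := raddf0 phi.
have pos_subS := pos_partial_sum_subS S0 phi0.
have pos_image := @pos_partial_sum_tors _ _ phi (tors_restr phi) S_tors (fun=> erefl).
split; [|split].
- by rewrite pos_full_sumE; apply: absorbs_iff_bigcup_eq_torsion pos_subS pos_image.
- exact: absorbs_iff_tors_absorbs pos_subS pos_image.
move=> psi h1 h2; have psi0 : psi 0 = 0 by rewrite -phi0 h1.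
have sym_subS := sym_partial_sum_subS S0 phi0 psi0.
have sym_image := @sym_partial_sum_tors _ _ phi psi (tors_restr phi)
  (tors_restr_inv h1 h2) S_tors (fun=> erefl) (fun=> erefl).
split.
- by rewrite sym_full_sumE; apply: absorbs_iff_bigcup_eq_torsion sym_subS sym_image.
- exact: absorbs_iff_tors_absorbs sym_subS sym_image.
Qed.
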